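(* Consider a finite quiver with nodes $i=1,\dots,n$, each carrying an integer $N_i\ge 2$ and a non-negative integer $F_i$ (number of fundamental hypermultiplets), and with a finite multiset $E$ of edges, each edge $e$ joining two distinct nodes $s(e)\neq t(e)$ (bifundamental hypermultiplets; no loops/adjoints). For $\mathbf m=(m_{ia})_{1\le i\le n,\,1\le a\le N_i}\in\mathbb Z^{\sum_i N_i}$ define $$\Delta(\mathbf m)=\frac12\sum_{i=1}^n F_i\sum_{a=1}^{N_i}|m_{ia}|+\frac12\sum_{e\in E}\sum_{a=1}^{N_{s(e)}}\sum_{b=1}^{N_{t(e)}}|m_{s(e)a}-m_{t(e)b}|-\sum_{i=1}^n\sum_{1\le a<b\le N_i}|m_{ia}-m_{ib}|.$$ Assume that $\Delta(\mathbf m)\ge 1$ for every nonzero $\mathbf m$. Then every $\mathbf m$ with $\Delta(\mathbf m)=1$ has either all components $m_{ia}\ge 0$ or all components $m_{ia}\le 0$; moreover, for such $\mathbf m$ the traces $\sum_{a=1}^{N_i} m_{ia}$, $i=1,\dots,n$, are not all zero.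
   Context: This $\Delta(\mathbf m)$ is the monopole dimension of a 3d $\mathcal N=4$ gauge theory with gauge group $\prod_i U(N_i)$, fundamental and bifundamental hypermultiplets; the hypothesis $\Delta(\mathbf m)\ge 1$ for all $\mathbf m\neq 0$ is the paper's notion of a ''good'' theory. *)

From HB Require Import structures.
From mathcomp Require Import all_boot all_order all_algebra.
Set Implicit Arguments. Unset Strict Implicit. Unset Printing Implicit Defensive.
Import Order.TTheory GRing.Theory Num.Theory.
Local Open Scope ring_scope.

(* Quiver data: nodes 'I_n, ranks N i, fundamental flavours F i,
   edges E as a list (multiset) of ordered pairs (s(e), t(e)). *)
Definition charge (n : nat) (N : 'I_n -> nat) := forall i : 'I_n, 'I_(N i) -> int.

Definition Delta (n : nat) (N F : 'I_n -> nat) (E : seq ('I_n * 'I_n))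
  (m : charge N) : rat :=
  (1 / 2) * (\sum_(i < n) (F i)%:R * \sum_(a < N i) (`|m i a|)%:~R)
  + (1 / 2) * (\sum_(e <- E) \sum_(a < N e.1) \sum_(b < N e.2)
                 (`|m e.1 a - m e.2 b|)%:~R)
  - \sum_(i < n) \sum_(a < N i) \sum_(b < N i | (a < b)%N)
        (`|m i a - m i b|)%:~R.

From HB Require Import structures.
From mathcomp Require Import all_boot all_order all_algebra.
From mathcomp Require Import ring lra.

Set Implicit Arguments.
Unset Strict Implicit.
Unset Printing Implicit Defensive.
Import Order.TTheory GRing.Theory Num.Theory.
Local Open Scope ring_scope.

(* Splitting a charge into its positive part [max m 0] and its negative part
   [min m 0] splits every absolute value occurring in Delta, so Delta is
   additive under this decomposition.  A charge of Delta 1 taking both signs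
   would have two nonzero parts, each of Delta at least 1 by goodness, hence
   Delta at least 2.  A one-signed charge with all traces zero vanishes, and
   then Delta is 0, not 1. *)

Lemma normB_sign_split (R : realDomainType) (x y : R) :
  `|x - y| = `|Num.max x 0 - Num.max y 0| + `|Num.min x 0 - Num.min y 0|.
Proof.
wlog le_yx : x y / y <= x.
  move=> hwlog; have /orP[/hwlog //|/hwlog sym] := le_total y x.
  by rewrite distrC sym; congr (_ + _); exact: distrC.
rewrite !ger0_norm ?subr_ge0 ?le_max2 ?le_min2 //.
have /orP[x0|x0] := le_total x 0; have /orP[y0|y0] := le_total y 0.
all: rewrite ?(max_r x0, max_l x0, min_l x0, min_r x0).
all: rewrite ?(max_r y0, max_l y0, min_l y0, min_r y0).
all: lra.
Qed.

Lemma normr_sign_split (R : realDomainType) (x : R) :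
  `|x| = `|Num.max x 0| + `|Num.min x 0|.
Proof. by have := normB_sign_split x 0; rewrite maxxx minxx !subr0. Qed.

Section MonopoleDimension.

Variables (n : nat) (N F : 'I_n -> nat) (E : seq ('I_n * 'I_n)).

Definition flavour_sum (m : charge N) : rat :=
  \sum_(i < n) (F i)%:R * \sum_(a < N i) (`|m i a|)%:~R.

Definition edge_sum (m : charge N) : rat :=
  \sum_(e <- E) \sum_(a < N e.1) \sum_(b < N e.2) (`|m e.1 a - m e.2 b|)%:~R.

Definition vector_sum (m : charge N) : rat :=
  \sum_(i < n) \sum_(a < N i) \sum_(b < N i | (a < b)%N) (`|m i a - m i b|)%:~R.

Lemma DeltaE (m : charge N) :
  Delta F E m = 1 / 2 * flavour_sum m + 1 / 2 * edge_sum m - vector_sum m.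
Proof. by []. Qed.

Definition charge_pos (m : charge N) : charge N := fun i a => Num.max (m i a) 0.
Definition charge_neg (m : charge N) : charge N := fun i a => Num.min (m i a) 0.

Definition norm_additive (m p q : charge N) : Prop :=
  (forall i a, `|m i a| = `|p i a| + `|q i a|) /\
  (forall i j a b, `|m i a - m j b| = `|p i a - p j b| + `|q i a - q j b|).

Section NormAdditive.

Variables m p q : charge N.
Hypothesis mpq : norm_additive m p q.

Lemma flavour_sum_add : flavour_sum m = flavour_sum p + flavour_sum q.
Proof.
have [norm_add _] := mpq.
rewrite -big_split; apply: eq_bigr => i _ /=; rewrite -mulrDr -big_split /=.
by congr (_ * _); apply: eq_bigr => a _; rewrite norm_add intrD.
Qed.

Lemma edge_sum_add : edge_sum m = edge_sum p + edge_sum q.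
Proof.
have [_ dist_add] := mpq.
rewrite -big_split; apply: eq_bigr => e _; rewrite -big_split.
apply: eq_bigr => a _; rewrite -big_split.
by apply: eq_bigr => b _; rewrite dist_add intrD.
Qed.

Lemma vector_sum_add : vector_sum m = vector_sum p + vector_sum q.
Proof.
have [_ dist_add] := mpq.
rewrite -big_split; apply: eq_bigr => i _; rewrite -big_split.
apply: eq_bigr => a _; rewrite -big_split.
by apply: eq_bigr => b _; rewrite dist_add intrD.
Qed.

Lemma Delta_add : Delta F E m = Delta F E p + Delta F E q.
Proof. by rewrite !DeltaE flavour_sum_add edge_sum_add vector_sum_add; ring. Qed.

End NormAdditive.

Lemma Delta_pos_neg (m : charge N) :
  Delta F E m = Delta F E (charge_pos m) + Delta F E (charge_neg m).
Proof.
by apply: Delta_add; split => *; [exact: normr_sign_split | exact: normB_sign_split].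
Qed.

Lemma Delta_charge0 (m : charge N) : (forall i a, m i a = 0) -> Delta F E m = 0.
Proof.
move=> m0; have m_add : norm_additive m m m.
  by split=> *; rewrite !m0 ?subr0 normr0 ?addr0.
by have := Delta_add m_add; rewrite -{1}[Delta F E m]addr0 => /addrI.
Qed.

Lemma charge0_of_traces0 (m : charge N) :
  (forall i a, 0 <= m i a) \/ (forall i a, m i a <= 0) ->
  (forall i, \sum_(a < N i) m i a = 0) -> forall i a, m i a = 0.
Proof.
move=> [m_ge0|m_le0] traces0 i a.
  exact: (psumr_eq0P (fun a _ => m_ge0 i a) (traces0 i)).
have opp_ge0 (b : 'I_(N i)) : true -> 0 <= - m i b by rewrite oppr_ge0.
have opp_sum0 : \sum_(b < N i) - m i b = 0 by rewrite sumrN traces0 oppr0.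
by apply: oppr_inj; rewrite oppr0 (psumr_eq0P opp_ge0 opp_sum0 (i := a)).
Qed.

Section GoodTheory.

Hypothesis good : forall m : charge N, (exists i a, m i a != 0) -> 1 <= Delta F E m.

Lemma Delta_ge2_of_mixed_signs (m : charge N) i a j b :
  m i a < 0 -> 0 < m j b -> 2 <= Delta F E m.
Proof.
move=> m_neg m_pos.
have pos_ge1 : 1 <= Delta F E (charge_pos m).
  by apply: good; exists j, b; rewrite /charge_pos (max_l (ltW m_pos)) gt_eqF.
have neg_ge1 : 1 <= Delta F E (charge_neg m).
  by apply: good; exists i, a; rewrite /charge_neg (min_l (ltW m_neg)) lt_eqF.
by rewrite Delta_pos_neg; exact: lerD pos_ge1 neg_ge1.
Qed.

Lemma Delta1_sign (m : charge N) : Delta F E m = 1 ->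
  (forall i a, 0 <= m i a) \/ (forall i a, m i a <= 0).
Proof.
move=> Delta1.
have [/existsP[i /existsP[a m_neg]]|] := boolP [exists i, exists a, m i a < 0].
  right => j b; rewrite leNgt; apply/negP => m_pos.
  by have := Delta_ge2_of_mixed_signs m_neg m_pos; rewrite Delta1.
rewrite negb_exists => /forallP no_neg; left => i a.
by have /existsPn/(_ a) := no_neg i; rewrite -leNgt.
Qed.

End GoodTheory.

End MonopoleDimension.

Theorem mainTheorem3 (n : nat) (N F : 'I_n -> nat) (E : seq ('I_n * 'I_n))
  (HN : forall i, (2 <= N i)%N)
  (HE : forall e, e \in E -> e.1 != e.2)
  (Hgood : forall m : charge N, (exists i a, m i a != 0) -> 1 <= Delta F E m) :
  forall m : charge N, Delta F E m = 1 ->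
    ((forall i a, 0 <= m i a) \/ (forall i a, m i a <= 0)) /\
    (exists i, \sum_(a < N i) m i a != 0).
Proof.
move=> m Delta1; have sign := Delta1_sign Hgood Delta1; split => //.
have [/existsP[i trace_i]|] := boolP [exists i, \sum_(a < N i) m i a != 0].
  by exists i.
rewrite negb_exists => /forallP traces0.
have m0 := charge0_of_traces0 sign (fun i => eqP (negPn (traces0 i))).
by move: Delta1; rewrite Delta_charge0.
Qed.
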